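(* Let $(\mathcal I,T)$ be of class $\mathcal{DR}$, let $\mu$ be an admissible probability measure with density $\phi$, and fix a real $s>0$. Then the following identity holds in the ring of formal power series in $v,t$: $$\sum_{w\in\{0,1\}^\star}v^{|w|}\,t^{n(w)}\,p_\mu(w)^s=\sum_{n\ge0}v^n\,q(n)^s\sum_{k\ge0}t^k\,\mathbb G_{v,s}^k\big[S[\phi]^s\big](0,q(n)).$$ (For fixed powers of $v$ and $t$, the coefficient on the right-hand side is a finite sum.)
   Context: Let $\mathcal I=[0,1]$. A binary dynamical system is given by $c\in]0,1[$ and two $C^2$ bijections, $a:[0,1]\to[0,c]$ and $b:[0,1]\to[c,1]$. The map $T$ equals $a^{-1}$ on $]0,c[$ and $b^{-1}$ on $]c,1[$. Class $\mathcal{DR}$: $a$ is increasing, $b$ is decreasing, $a(0)=0$, $a(1)=c$, $b(0)=1$, $b(1)=c$, $a'>0$ and $b'<0$ on $[0,1]$, and $a'(x)<1$, $b'(x)>-1$ for $x\in]0,1]$. Coding: $h_0=a$, $h_1=b$; for $w=w_1\cdots w_k$, $h_w=h_{w_1}\circ\cdots\circ h_{w_k}$ and $\mathcal I_w=h_w(\mathcal I)$. Here $\{0,1\}^\star$ is the set of finite words (including the empty word $\varepsilon$, with $h_\varepsilon=\mathrm{id}$), $|w|$ is the length of $w$, and $n(w)$ is its number of ones. A probability $\mu$ is admissible if it has a strictly positive density $\phi\in C^1([0,1])$. Set $p_\mu(w)=\mu(\mathcal I_w)$. Let $q(n)=a^n(1)$, and $g_m=a^{m-1}\circ b$ for $m\ge1$.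 For a function $F$ on $[0,1]^2$ and $x\neq y$, define $$\mathbb G_{v,s}[F](x,y)=\sum_{m\ge1}v^m\Big|\frac{g_m(x)-g_m(y)}{x-y}\Big|^sF(g_m(x),g_m(y)),$$ with the diagonal value obtained by replacing the difference quotient by $|g_m'(x)|$. $S[\phi]$ is the function on $[0,1]^2$ defined by $$S[\phi](x,y)=\frac{1}{y-x}\int_x^y\phi(t)\,dt\quad(x\neq y),\qquad S[\phi](x,x)=\phi(x).$$ *)

From Stdlib Require Import Reals List.
From Coquelicot Require Import Coquelicot.
Open Scope R_scope.

Definition in01 (x : R) : Prop := 0 <= x <= 1.

Definition deriv_on01 (f f' : R -> R) : Prop :=
  forall x, in01 x ->
    filterlim (fun y => (f y - f x) / (y - x))
      (within (fun y => in01 y /\ y <> x) (locally x)) (locally (f' x)).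

Definition cont_on01 (f : R -> R) : Prop :=
  forall x, in01 x -> filterlim f (within in01 (locally x)) (locally (f x)).

Definition rpow (x s : R) : R :=
  if Req_EM_T x 0 then 0 else Rpower x s.

(** Coding maps: h_0 = a, h_1 = b (true = letter 1),
    h_w = h_{w1} o ... o h_{wk}. *)
Definition hletter (a b : R -> R) (c : bool) : R -> R := if c then b else a.
Definition hword (a b : R -> R) (w : list bool) (x : R) : R :=
  fold_right (fun c acc => hletter a b c acc) x w.

Definition nones (w : list bool) : nat := count_occ Bool.bool_dec w true.

Fixpoint words (n : nat) : list (list bool) :=
  match n with
  | O => nil :: nil
  | S n => map (cons false) (words n) ++ map (cons true) (words n)
  end.

(** p_mu(w) = mu(I_w) where mu has density phi and I_w = h_w([0,1]) is the
    (closed) interval with endpoints h_w(0), h_w(1). *)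
Definition p_mu (a b phi : R -> R) (w : list bool) : R :=
  Rabs (RInt phi (hword a b w 0) (hword a b w 1)).

Definition q (a : R -> R) (n : nat) : R := Nat.iter n a 1.

Definition g (a b : R -> R) (m : nat) (x : R) : R := Nat.iter (m - 1) a (b x).

(** g_m'(x) by the chain rule: (prod_{j=0}^{m-2} a'(a^j(b x))) * b'(x). *)
Fixpoint prod_deriv_a (a a1 : R -> R) (k : nat) (y : R) : R :=
  match k with
  | O => 1
  | S k => a1 (Nat.iter k a y) * prod_deriv_a a a1 k y
  end.
Definition g_deriv (a a1 b b1 : R -> R) (m : nat) (x : R) : R :=
  prod_deriv_a a a1 (m - 1) (b x) * b1 x.

Definition dq (a a1 b b1 : R -> R) (m : nat) (x y : R) : R :=
  if Req_EM_T x y then Rabs (g_deriv a a1 b b1 m x)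
  else Rabs ((g a b m x - g a b m y) / (x - y)).

Definition ser := nat -> R.

(** The operator G_{v,s} acting on functions F : [0,1]^2 -> R[[v]]:
    coefficient of v^N in G[F](x,y) is
    sum_{1<=m<=N} |dq_m(x,y)|^s * [v^(N-m)] F(g_m x, g_m y). *)
Definition Gop (a a1 b b1 : R -> R) (s : R) (F : R -> R -> ser) : R -> R -> ser :=
  fun x y N =>
    sum_f_R0 (fun m => if Nat.eqb m 0 then 0
                      else rpow (dq a a1 b b1 m x y) s * F (g a b m x) (g a b m y) (N - m)%nat)
             N.

Definition Sphi (phi : R -> R) (x y : R) : R :=
  if Req_EM_T x y then phi x else / (y - x) * RInt phi x y.

Definition const_ser (F : R -> R -> R) : R -> R -> ser :=
  fun x y N => match N with O => F x y | S _ => 0 end.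

(** Coefficient of v^N t^K on the left-hand side. *)
Definition lhs_coef (a b phi : R -> R) (s : R) (N K : nat) : R :=
  fold_right Rplus 0
    (map (fun w => if Nat.eqb (nones w) K then rpow (p_mu a b phi w) s else 0)
         (words N)).

(** Coefficient of v^N t^K on the right-hand side:
    sum_{n=0}^N q(n)^s [v^(N-n)] G^K[S[phi]^s](0, q(n)). *)
Definition rhs_coef (a a1 b b1 phi : R -> R) (s : R) (N K : nat) : R :=
  sum_f_R0 (fun n =>
    rpow (q a n) s *
    Nat.iter K (Gop a a1 b b1 s)
      (const_ser (fun x y => rpow (Sphi phi x y) s)) 0 (q a n) (N - n)%nat) N.

From Stdlib Require Import Reals List Lra Lia.
From Coquelicot Require Import Coquelicot.
Open Scope R_scope.

(* Since h_w = h_{w_1} o ... o h_{w_k}, every word factors uniquely as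
   w = u 0^n with u a concatenation of K blocks 0^(m-1) 1, i.e. h_w = (product
   of K maps g_m) o a^n.  As a^n 0 = 0 and a^n 1 = q(n), and
   p_mu(w)^s = |h_w 1 - h_w 0|^s S[phi]^s(h_w 0, h_w 1), it suffices to show,
   for arbitrary endpoints x, y and an arbitrary weight F, that summing
   |h_u y - h_u x|^s F(h_u x, h_u y) over the words u with K ones gives the
   corresponding coefficient of sum_n |a^n y - a^n x|^s G^K[F](a^n x, a^n y).
   This follows from |y - x|^s |dq_m(x,y)|^s = |g_m y - g_m x|^s: both sides
   satisfy the same recursion in the length, peeling off the innermost letter. *)

Definition sum_words (N : nat) (f : list bool -> R) : R :=
  fold_right Rplus 0 (map f (words N)).

Lemma fold_right_Rplus_app (l1 l2 : list R) :
  fold_right Rplus 0 (l1 ++ l2) = fold_right Rplus 0 l1 + fold_right Rplus 0 l2.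
Proof. induction l1 as [|r l1 IH]; simpl; [lra|]. rewrite IH; lra. Qed.

Lemma sum_words_S N f :
  sum_words (S N) f =
  sum_words N (fun w => f (false :: w)) + sum_words N (fun w => f (true :: w)).
Proof. unfold sum_words; simpl. rewrite map_app, fold_right_Rplus_app, !map_map. reflexivity. Qed.

Lemma sum_words_ext N f f' : (forall w, f w = f' w) -> sum_words N f = sum_words N f'.
Proof. intros H; unfold sum_words. f_equal. apply map_ext, H. Qed.

Lemma sum_words_0 N : sum_words N (fun _ => 0) = 0.
Proof. induction N as [|N IH]; [unfold sum_words; simpl; lra|]. rewrite sum_words_S, IH. lra. Qed.

Lemma sum_words_S_last N : forall f,
  sum_words (S N) f =
  sum_words N (fun w => f (w ++ false :: nil)) + sum_words N (fun w => f (w ++ true :: nil)).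
Proof.
  induction N as [|N IH]; intros f.
  - rewrite sum_words_S. unfold sum_words; simpl. lra.
  - rewrite sum_words_S, (IH (fun w => f (false :: w))), (IH (fun w => f (true :: w))),
      (sum_words_S N (fun w => f (w ++ false :: nil))),
      (sum_words_S N (fun w => f (w ++ true :: nil))).
    simpl. lra.
Qed.

Lemma hword_app_last a b u c x : hword a b (u ++ c :: nil) x = hword a b u (hletter a b c x).
Proof. unfold hword. rewrite fold_right_app. reflexivity. Qed.

Lemma nones_app_last u c : nones (u ++ c :: nil) = (nones u + if c then 1 else 0)%nat.
Proof. unfold nones. rewrite count_occ_app. destruct c; reflexivity. Qed.

Lemma rpow_0 s : rpow 0 s = 0.
Proof. unfold rpow. destruct (Req_EM_T 0 0); [reflexivity|congruence]. Qed.

Lemma rpow_mult u v s : 0 <= u -> 0 <= v -> rpow (u * v) s = rpow u s * rpow v s.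
Proof.
  intros Hu Hv.
  destruct (Req_EM_T u 0) as [->|Hu0]; [rewrite Rmult_0_l, rpow_0; lra|].
  destruct (Req_EM_T v 0) as [->|Hv0]; [rewrite Rmult_0_r, rpow_0; lra|].
  unfold rpow.
  destruct (Req_EM_T (u * v) 0) as [E|_]; [apply Rmult_integral in E; tauto|].
  destruct (Req_EM_T u 0); [tauto|]. destruct (Req_EM_T v 0); [tauto|].
  rewrite Rpower_mult_distr; lra.
Qed.

Lemma rpow_dist_mul_dq a a1 b b1 s m x y :
  rpow (Rabs (y - x)) s * rpow (dq a a1 b b1 m x y) s
  = rpow (Rabs (g a b m y - g a b m x)) s.
Proof.
  unfold dq. destruct (Req_EM_T x y) as [<-|Hxy].
  - rewrite !Rminus_diag, Rabs_R0, !rpow_0. lra.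
  - rewrite <- rpow_mult, <- Rabs_mult by apply Rabs_pos.
    do 2 f_equal. field. lra.
Qed.

Section WordSums.
Variables (a a1 b b1 : R -> R) (s : R) (F : R -> R -> R).

Definition word_weight (x y : R) (u : list bool) : R :=
  rpow (Rabs (hword a b u y - hword a b u x)) s * F (hword a b u x) (hword a b u y).

Definition word_sum (x y : R) (M K : nat) : R :=
  sum_words M (fun u => if Nat.eqb (nones u) K then word_weight x y u else 0).

Definition block_sum (x y : R) (M K : nat) : R :=
  rpow (Rabs (y - x)) s * Nat.iter K (Gop a a1 b b1 s) (const_ser F) x y M.

Definition factored_sum (x y : R) (M K : nat) : R :=
  sum_f_R0 (fun n => block_sum (Nat.iter n a x) (Nat.iter n a y) (M - n) K) M.

Lemma word_sum_S x y M K :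
  word_sum x y (S M) K =
  word_sum (a x) (a y) M K + match K with O => 0 | S K' => word_sum (b x) (b y) M K' end.
Proof.
  unfold word_sum. rewrite sum_words_S_last. f_equal.
  - apply sum_words_ext; intro w. rewrite nones_app_last, Nat.add_0_r.
    unfold word_weight. rewrite !hword_app_last. reflexivity.
  - destruct K as [|K].
    + rewrite <- (sum_words_0 M) at 1. apply sum_words_ext; intro w.
      rewrite nones_app_last, Nat.add_1_r. reflexivity.
    + apply sum_words_ext; intro w. rewrite nones_app_last, Nat.add_1_r. simpl.
      unfold word_weight. rewrite !hword_app_last. reflexivity.
Qed.

Lemma factored_sum_S x y M K :
  factored_sum x y (S M) K = block_sum x y (S M) K + factored_sum (a x) (a y) M K.
Proof.
  unfold factored_sum. rewrite decomp_sum by lia. simpl pred. f_equal.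
  apply sum_eq. intros i _. rewrite !Nat.iter_succ_r. reflexivity.
Qed.

Lemma block_sum_S x y M K :
  block_sum x y (S M) K = match K with O => 0 | S K' => factored_sum (b x) (b y) M K' end.
Proof.
  destruct K as [|K]; unfold block_sum; [simpl; unfold const_ser; lra|].
  rewrite Nat.iter_succ. unfold Gop at 1.
  rewrite decomp_sum by lia. simpl pred. simpl (Nat.eqb 0 0).
  rewrite Rplus_0_l, scal_sum. unfold factored_sum.
  apply sum_eq. intros i _. simpl (Nat.eqb (S i) 0). cbv iota.
  rewrite (Rmult_comm _ (rpow (Rabs (y - x)) s)), <- Rmult_assoc, rpow_dist_mul_dq.
  unfold g. replace (S i - 1)%nat with i by lia. reflexivity.
Qed.

Lemma word_sum_factored M : forall x y K, word_sum x y M K = factored_sum x y M K.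
Proof.
  induction M as [|M IH]; intros x y K.
  - unfold word_sum, factored_sum, sum_words, block_sum. destruct K; simpl.
    + unfold word_weight, const_ser. simpl. lra.
    + unfold Gop. simpl. ring.
  - rewrite word_sum_S, factored_sum_S, block_sum_S. destruct K; rewrite !IH; lra.
Qed.

End WordSums.

Lemma ball_R x e y : ball x e y <-> Rabs (y - x) < e.
Proof. reflexivity. Qed.

Lemma cont_on01_of_deriv f f' : deriv_on01 f f' -> cont_on01 f.
Proof.
  intros Hd x Hx. apply filterlim_locally. intros eps.
  assert (HQ := proj1 (filterlim_locally _ _) (Hd x Hx) (mkposreal 1 Rlt_0_1)).
  set (M := Rabs (f' x) + 1).
  assert (HM : 0 < M) by (unfold M; pose proof (Rabs_pos (f' x)); lra).
  assert (Hr : 0 < eps / M) by (apply Rdiv_lt_0_compat; [apply cond_pos|exact HM]).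
  unfold within in *.
  generalize (filter_and _ _ HQ (locally_ball x (mkposreal _ Hr))).
  apply filter_imp. intros y [HQy Hy] Hin. rewrite ball_R in *. simpl in Hy.
  destruct (Req_EM_T y x) as [->|Hne]; [rewrite Rminus_diag, Rabs_R0; apply cond_pos|].
  specialize (HQy (conj Hin Hne)). simpl in HQy.
  assert (HQM : Rabs ((f y - f x) / (y - x)) <= M).
  { unfold M. pose proof (Rabs_triang_inv ((f y - f x) / (y - x)) (f' x)). lra. }
  replace (f y - f x) with ((f y - f x) / (y - x) * (y - x)) by (field; lra).
  rewrite Rabs_mult.
  apply Rle_lt_trans with (M * Rabs (y - x)); [apply Rmult_le_compat_r; [apply Rabs_pos|exact HQM]|].
  apply Rmult_lt_compat_l with (r := M) in Hy; [|exact HM].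
  replace (M * (eps / M)) with (pos eps) in Hy by (field; lra). exact Hy.
Qed.

Definition clamp01 (z : R) : R := Rmax 0 (Rmin z 1).

Lemma clamp01_in01 z : in01 (clamp01 z).
Proof. unfold clamp01, in01, Rmax, Rmin. repeat destruct Rle_dec; lra. Qed.

Lemma clamp01_id z : in01 z -> clamp01 z = z.
Proof. unfold clamp01, in01, Rmax, Rmin. intros. repeat destruct Rle_dec; lra. Qed.

Lemma clamp01_lipschitz z w : Rabs (clamp01 w - clamp01 z) <= Rabs (w - z).
Proof. unfold clamp01, Rmax, Rmin, Rabs. repeat destruct Rle_dec; repeat destruct Rcase_abs; lra. Qed.

Lemma filterlim_clamp01 z : filterlim clamp01 (locally z) (within in01 (locally (clamp01 z))).
Proof.
  intros P [d Hd]. exists d. intros w Hw. apply Hd; [|apply clamp01_in01].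
  rewrite ball_R in *. pose proof (clamp01_lipschitz z w). lra.
Qed.

(* Continuity on [0,1] is only relative, so integrate the extension [f o clamp01],
   which is continuous on all of R. *)
Lemma ex_RInt_on01 f : cont_on01 f -> forall x y, in01 x -> in01 y -> ex_RInt f x y.
Proof.
  intros Hf x y Hx Hy.
  apply ex_RInt_ext with (f := fun t => f (clamp01 t)).
  - intros t Ht. rewrite clamp01_id; [reflexivity|].
    unfold in01, Rmin, Rmax in *. destruct Rle_dec; lra.
  - apply (@ex_RInt_continuous R_CompleteNormedModule). intros z _.
    exact (filterlim_comp _ _ _ _ _ _ _ _ (filterlim_clamp01 z) (Hf _ (clamp01_in01 z))).
Qed.

Section Density.
Variable phi : R -> R.
Hypothesis phi_int : forall x y, in01 x -> in01 y -> ex_RInt phi x y.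
Hypothesis phi_ge0 : forall x, in01 x -> 0 <= phi x.

Lemma RInt_ge0_on01 x y : in01 x -> in01 y -> x <= y -> 0 <= RInt phi x y.
Proof.
  intros Hx Hy Hxy. apply RInt_ge_0; [exact Hxy|apply phi_int; auto|].
  intros t Ht. apply phi_ge0. unfold in01 in *; lra.
Qed.

Lemma Sphi_ge0 x y : in01 x -> in01 y -> 0 <= Sphi phi x y.
Proof.
  intros Hx Hy. unfold Sphi. destruct (Req_EM_T x y) as [_|Hne]; [apply phi_ge0, Hx|].
  destruct (Rlt_or_le x y) as [Hlt|Hle].
  - apply Rmult_le_pos; [apply Rlt_le, Rinv_0_lt_compat; lra|].
    apply RInt_ge0_on01; auto; lra.
  - rewrite <- (opp_RInt_swap phi y x) by (apply phi_int; auto).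
    assert (HI := RInt_ge0_on01 y x Hy Hx Hle).
    assert (Hi : / (y - x) < 0) by (apply Rinv_lt_0_compat; lra).
    change (opp (RInt phi y x)) with (- RInt phi y x). nra.
Qed.

Lemma rpow_abs_RInt s x y : in01 x -> in01 y ->
  rpow (Rabs (RInt phi x y)) s = rpow (Rabs (y - x)) s * rpow (Sphi phi x y) s.
Proof.
  intros Hx Hy. destruct (Req_EM_T x y) as [<-|Hne].
  - replace (RInt phi x x) with 0 by (rewrite RInt_point; reflexivity).
    rewrite Rminus_diag, Rabs_R0, rpow_0. ring.
  - replace (RInt phi x y) with ((y - x) * Sphi phi x y).
    2:{ unfold Sphi. destruct (Req_EM_T x y); [contradiction|]. field. lra. }
    rewrite Rabs_mult, (Rabs_pos_eq (Sphi phi x y)) by (apply Sphi_ge0; auto).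
    apply rpow_mult; [apply Rabs_pos|apply Sphi_ge0; auto].
Qed.

End Density.

Lemma hword_in01 a b : (forall x, in01 x -> in01 (a x)) -> (forall x, in01 x -> in01 (b x)) ->
  forall w x, in01 x -> in01 (hword a b w x).
Proof. intros Ha Hb w x Hx. induction w as [|[] w IH]; simpl; auto. Qed.

Lemma iter_in01 a n x : (forall x, in01 x -> in01 (a x)) -> in01 x -> in01 (Nat.iter n a x).
Proof. intros Ha Hx. induction n; simpl; auto. Qed.

Lemma iter_fixpoint {A} (f : A -> A) n x : f x = x -> Nat.iter n f x = x.
Proof. intros Hx. induction n as [|n IH]; simpl; [|rewrite IH]; auto. Qed.
Theorem theorem5p1
  (c : R) (a a1 a2 b b1 b2 phi phi1 : R -> R) (s : R)
  (Hc : 0 < c < 1)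
  (Ha1 : deriv_on01 a a1) (Ha2 : deriv_on01 a1 a2) (Ha2c : cont_on01 a2)
  (Hb1 : deriv_on01 b b1) (Hb2 : deriv_on01 b1 b2) (Hb2c : cont_on01 b2)
  (Ha_maps : forall x, in01 x -> 0 <= a x <= c)
  (Ha_inj : forall x y, in01 x -> in01 y -> a x = a y -> x = y)
  (Ha_surj : forall z, 0 <= z <= c -> exists x, in01 x /\ a x = z)
  (Hb_maps : forall x, in01 x -> c <= b x <= 1)
  (Hb_inj : forall x y, in01 x -> in01 y -> b x = b y -> x = y)
  (Hb_surj : forall z, c <= z <= 1 -> exists x, in01 x /\ b x = z)
  (Ha_incr : forall x y, in01 x -> in01 y -> x < y -> a x < a y)
  (Hb_decr : forall x y, in01 x -> in01 y -> x < y -> b y < b x)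
  (Ha0 : a 0 = 0) (Ha1' : a 1 = c) (Hb0 : b 0 = 1) (Hb1' : b 1 = c)
  (Ha1pos : forall x, in01 x -> 0 < a1 x)
  (Hb1neg : forall x, in01 x -> b1 x < 0)
  (Ha1lt1 : forall x, 0 < x <= 1 -> a1 x < 1)
  (Hb1gtm1 : forall x, 0 < x <= 1 -> -1 < b1 x)
  (Hphi1 : deriv_on01 phi phi1) (Hphi1c : cont_on01 phi1)
  (Hphipos : forall x, in01 x -> 0 < phi x)
  (Hprob : RInt phi 0 1 = 1)
  (Hs : 0 < s) :
  forall N K : nat,
    lhs_coef a b phi s N K = rhs_coef a a1 b b1 phi s N K.
Proof.
  intros N K.
  assert (Ha01 : forall x, in01 x -> in01 (a x)).
  { intros x Hx. specialize (Ha_maps x Hx). unfold in01; lra. }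
  assert (Hb01 : forall x, in01 x -> in01 (b x)).
  { intros x Hx. specialize (Hb_maps x Hx). unfold in01; lra. }
  assert (H0 : in01 0) by (unfold in01; lra).
  assert (H1 : in01 1) by (unfold in01; lra).
  assert (Hphi_int := ex_RInt_on01 phi (cont_on01_of_deriv phi phi1 Hphi1)).
  assert (Hphi_ge0 : forall x, in01 x -> 0 <= phi x) by (intros; apply Rlt_le; auto).
  transitivity (word_sum a b s (fun x y => rpow (Sphi phi x y) s) 0 1 N K).
  - unfold lhs_coef, word_sum, sum_words, word_weight, p_mu. f_equal.
    apply map_ext. intro w. destruct (Nat.eqb (nones w) K); [|reflexivity].
    apply rpow_abs_RInt; auto using hword_in01.
  - rewrite (word_sum_factored a a1 b b1). apply sum_eq. intros n _.
    unfold block_sum, q. rewrite (iter_fixpoint a n 0 Ha0), Rminus_0_r.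
    rewrite Rabs_pos_eq by apply (iter_in01 a n 1 Ha01 H1). reflexivity.
Qed.
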